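(* Let $G$ be a tree, let $P$ and $T$ be valid search trees on $G$. Then every node $v$ of $T$ is a transition point (with respect to $T$) of at most one node $y$ of $P$.
   Context: Search tree on a tree: a rooted tree $T$ is a valid search tree on an unrooted tree $G$ if the root $r$ of $T$ is a vertex of $G$ and the subtrees of $T\setminus r$ are valid search trees on the connected components of $G\setminus r$. For a node $y$ of $P$, $P(y)$ denotes the subtree of $P$ rooted at $y$ (and its vertex set). Transition points: let $y$ be a non-leaf node of $P$ with children $y_1,\dots,y_d$, and regard $y$ itself as belonging to the part $P(y_1)$ (i.e. the parts are $\{y\}\cup P(y_1), P(y_2),\dots,P(y_d)$). For $i=1,\dots,d$ let $\ell_i$ be the node of the $i$-th part having smallest depth in $T$. Let $\ell_{i^*}$ be the one of smallest depth in $T$ among $\ell_1,\dots,\ell_d$ (it is the lowest common ancestor in $T$ of all nodes of $P(y)$), called the dominating node of $P(y)$ in $T$. For each $i\neq i^*$, the node $\ell_i$ is called the transition point of $y$ for $P(y_i)$. *)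

From mathcomp Require Import all_boot.
Set Implicit Arguments.
Unset Strict Implicit.
Unset Printing Implicit Defensive.

Section Defs.
Variable V : finType.

Definition simple_graph (e : rel V) : Prop := symmetric e /\ irreflexive e.

Definition has_cycle (e : rel V) : Prop :=
  exists (x : V) (p : seq V),
    [/\ 2 <= size p, path e x p, uniq (x :: p) & e (last x p) x].

Definition is_tree (e : rel V) : Prop :=
  [/\ simple_graph e, (forall x y : V, connect e x y) & ~ has_cycle e].

Definition restr (e : rel V) (A : {set V}) : rel V :=
  fun x y => [&& e x y, x \in A & y \in A].
Definition comp (e : rel V) (A : {set V}) (x : V) : {set V} :=
  [set y in A | connect (restr e A) x y].

(* valid e par S r : the nodes of S, with parent map par, form a rooted tree
   with root r which is a valid search tree on G[S]: r \in S, and for every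
   connected component C of G[S \ r] there is a child c of r (par c = Some r)
   such that the subtree rooted at c is a valid search tree on C. *)
Inductive valid (e : rel V) (par : V -> option V) : {set V} -> V -> Prop :=
| Valid (S : {set V}) (r : V) :
    r \in S ->
    (forall x, x \in S :\ r ->
       exists c, [/\ c \in comp e (S :\ r) x, par c = Some r
                   & valid e par (comp e (S :\ r) x) c]) ->
    valid e par S r.

Definition search_tree (e : rel V) (par : V -> option V) (r : V) : Prop :=
  valid e par [set: V] r /\ par r = None.

Definition anc (par : V -> option V) (z x : V) : bool :=
  [exists n : 'I_#|V|.+1, iter n (obind par) (Some x) == Some z].

Definition depth (par : V -> option V) (x : V) : nat :=
  #|[set z | (z != x) && anc par z x]|.

Definition subtree (par : V -> option V) (y : V) : {set V} :=
  [set x | anc par y x].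

Definition children (par : V -> option V) (y : V) : {set V} :=
  [set c | par c == Some y].

(* the parts of P(y): y is put into the part of its designated first child
   fst y = y_1 *)
Definition part (par : V -> option V) (fst : V -> V) (y c : V) : {set V} :=
  if c == fst y then y |: subtree par c else subtree par c.

Definition is_top (parT : V -> option V) (A : {set V}) (v : V) : Prop :=
  v \in A /\ forall w, w \in A -> depth parT v <= depth parT w.

(* v is a transition point (w.r.t. T) of the node y of P:
   v = l_i for some part i, and i <> i*, where l_{i*} has smallest depth
   among l_1, ..., l_d. *)
Definition transition_point (parP : V -> option V) (fst : V -> V)
    (parT : V -> option V) (v y : V) : Prop :=
  exists c, [/\ c \in children parP y,
    is_top parT (part parP fst y c) v &
    exists c' u, [/\ c' \in children parP y, c' != c,
      is_top parT (part parP fst y c') u &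
      forall c'' w, c'' \in children parP y ->
        is_top parT (part parP fst y c'') w -> depth parT u <= depth parT w]].

End Defs.

From mathcomp Require Import all_boot.
Set Implicit Arguments. Unset Strict Implicit. Unset Printing Implicit Defensive.

(* Suppose v is a transition point of two distinct nodes y1, y2 of P.  Since
   v lies in P(y1) and in P(y2), the nodes y1 and y2 are comparable in P, say
   y1 is a proper ancestor of y2.  Then v is the T-shallowest node of the part
   of y1 that contains all of P(y2); in particular v is T-shallowest in P(y2).
   On the other hand, as a transition point of y2, v is not the dominating
   node: some other part of y2 has a top u with depth u <= depth v.  Now P(y2)
   is connected in G (subtrees of search trees are connected), and in a search
   tree T a connected vertex set has a unique node of minimal depth (a common
   T-ancestor of the set lies inside it).  Hence u = v, although u and v lie in
   different, disjoint, parts of y2 — a contradiction. *)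

Section Ancestors.
Variables (V : finType) (par : V -> option V).

Definition ancestor (z x : V) : Prop :=
  exists n, iter n (obind par) (Some x) = Some z.

Lemma ancestor_refl x : ancestor x x.
Proof. by exists 0. Qed.

Lemma ancestor_trans z y x : ancestor z y -> ancestor y x -> ancestor z x.
Proof. by move=> [m Hm] [n Hn]; exists (m + n); rewrite iterD Hn. Qed.

Lemma ancestor_parent p x : par x = Some p -> ancestor p x.
Proof. by exists 1. Qed.

(* The bounded definition [anc] agrees with [ancestor]: an orbit of
   [obind par] on [option V] reaches everything within #|V|.+1 steps. *)
Lemma ancP z x : anc par z x <-> ancestor z x.
Proof.
split; first by move=> /existsP [n /eqP Hn]; exists n.
move=> [n Hn]; apply/existsP.
have Hconn : fconnect (obind par) (Some x) (Some z) by rewrite -Hn fconnect_iter.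
have Horder : order (obind par) (Some x) <= #|V|.+1.
  by rewrite -card_option max_card.
have Hlt := leq_trans (findex_max Hconn) Horder.
by exists (Ordinal Hlt); rewrite /= iter_findex.
Qed.

Lemma iter_obind_None n : iter n (obind par) None = None.
Proof. by elim: n => //= n ->. Qed.

Lemma ancestor_total a b x :
  ancestor a x -> ancestor b x -> ancestor a b \/ ancestor b a.
Proof.
move=> [m Hm] [n Hn]; case: (leqP m n) => Hmn.
  by right; exists (n - m); rewrite -Hm -iterD subnK.
by left; exists (m - n); rewrite -Hn -iterD subnK // ltnW.
Qed.

Lemma ancestor_child y x :
  ancestor y x -> y != x -> exists c, par c = Some y /\ ancestor c x.
Proof.
move=> [n]; elim: n x => [|n IH] x; first by move=> [->]; rewrite eqxx.
rewrite iterSr /=; case Hp: (par x) => [p|]; last by rewrite iter_obind_None.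
move=> Hn Hyx; case: (eqVneq y p) => [->|Hyp].
  by exists x; split; [exact: Hp | exact: ancestor_refl].
have [c [Hc Hcp]] := IH p Hn Hyp.
by exists c; split => //; apply: ancestor_trans Hcp (ancestor_parent Hp).
Qed.

Lemma ancestor_parent_proper z x :
  ancestor z x -> z != x -> exists p, par x = Some p /\ ancestor z p.
Proof.
move=> [[|n]]; first by move=> [->]; rewrite eqxx.
rewrite iterSr /=; case Hp: (par x) => [p|]; last by rewrite iter_obind_None.
by move=> Hn _; exists p; split => //; exists n.
Qed.

Variable fst : V -> V.

Lemma part_cases y c x :
  x \in part par fst y c -> (x = y /\ c = fst y) \/ ancestor c x.
Proof.
rewrite /part; case: (eqVneq c (fst y)) => [->|_]; rewrite ?inE.
  by case/orP => [/eqP ->|/ancP]; [left|right].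
by move/ancP; right.
Qed.

Lemma part_ancestor y c x :
  par c = Some y -> x \in part par fst y c -> ancestor y x.
Proof.
move=> Hc /part_cases [[-> _]|Hcx]; first exact: ancestor_refl.
exact: ancestor_trans (ancestor_parent Hc) Hcx.
Qed.

Lemma ancestor_part y c x : ancestor c x -> x \in part par fst y c.
Proof. by move/ancP => Hcx; rewrite /part; case: ifP; rewrite !inE Hcx ?orbT. Qed.

End Ancestors.

Section Components.
Variables (V : finType) (e : rel V).

Definition connected_set (S : {set V}) : Prop :=
  forall a b, a \in S -> b \in S -> connect (restr e S) a b.

Lemma comp_sub (A : {set V}) x : comp e A x \subset A.
Proof. by apply/subsetP => y; rewrite inE => /andP []. Qed.

Lemma comp_self (A : {set V}) x : x \in A -> x \in comp e A x.
Proof. by move=> Hx; rewrite inE Hx connect0. Qed.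

Lemma connect_restr_in (B : {set V}) x t :
  connect (restr e B) x t -> x \in B -> t \in B.
Proof.
move=> /connectP [p Hp ->]; elim: p x Hp => [|y p IH] x //= /andP [Hxy Hp] _.
by apply: IH Hp _; case/and3P: Hxy.
Qed.

Lemma connect_restr_comp (A B : {set V}) x t :
  connect (restr e (A :&: B)) x t -> connect (restr e (A :&: comp e B x)) x t.
Proof.
move=> /connectP [p Hp ->]; apply/connectP; exists p => //.
suff Hpath : forall y, path (restr e (A :&: B)) y p -> connect (restr e B) x y ->
  path (restr e (A :&: comp e B x)) y p by apply: Hpath Hp (connect0 _ _).
elim: p {Hp} => [|z p IH] y //= /andP [Hyz Hp] Hxy.
move: Hyz; rewrite /restr !inE => /and3P [Heyz /andP [HyA HyB] /andP [HzA HzB]].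
have Hxz : connect (restr e B) x z.
  by apply: connect_trans Hxy (connect1 _); rewrite /restr Heyz HyB HzB.
by rewrite Heyz HyA HyB HzA HzB Hxy Hxz IH.
Qed.

Hypothesis e_sym : symmetric e.

Lemma restr_sym (B : {set V}) : symmetric (restr e B).
Proof. by move=> x y; rewrite /restr e_sym (andbC (x \in B)). Qed.

Lemma comp_connected (B : {set V}) y : connected_set (comp e B y).
Proof.
move=> a b; rewrite !inE => /andP [_ Ha] /andP [_ Hb].
have Hfrom_y t : connect (restr e B) y t -> connect (restr e (comp e B y)) y t.
  by rewrite -[comp e B y]setTI -{1}[B]setTI; apply: connect_restr_comp.
rewrite (connect_trans _ (Hfrom_y b Hb)) // (sym_connect_sym (restr_sym _)).
exact: Hfrom_y.
Qed.

Lemma comp_share (B : {set V}) w y s :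
  s \in comp e B w -> s \in comp e B y -> w \in comp e B y.
Proof.
rewrite !inE => /andP [HsB Hws] /andP [_ Hys].
have Hsym := sym_connect_sym (restr_sym B).
have Hyw : connect (restr e B) y w by apply: connect_trans Hys _; rewrite Hsym.
by rewrite Hyw andbT; rewrite Hsym in Hws; apply: connect_restr_in Hws HsB.
Qed.

End Components.

Section ValidSearchTrees.
Variables (V : finType) (e : rel V) (par : V -> option V).

Lemma valid_rect (Q : {set V} -> V -> Prop) :
  (forall (S : {set V}) (r : V), r \in S ->
    (forall x, x \in S :\ r -> exists c, [/\ c \in comp e (S :\ r) x,
        par c = Some r, valid e par (comp e (S :\ r) x) c
      & Q (comp e (S :\ r) x) c]) -> Q S r) ->
  forall (S : {set V}) (r : V), valid e par S r -> Q S r.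
Proof.
move=> HQ S r HV; have [n Hn] : exists n, #|S| <= n by exists #|S|.
elim: n S r HV Hn => [|n IH] S r [{}S {}r Hr Hcomp] Hn.
  by move: Hn; rewrite leqn0 => /eqP/cards0_eq HS; rewrite HS inE in Hr.
apply: HQ => // x Hx; have [c [Hcx Hc HVc]] := Hcomp x Hx.
exists c; split => //; apply: IH HVc _.
rewrite (cardsD1 r) Hr add1n ltnS in Hn.
by apply: leq_trans Hn; rewrite subset_leq_card // comp_sub.
Qed.

Lemma valid_root_ancestor S r :
  valid e par S r -> forall x, x \in S -> ancestor par r x.
Proof.
elim/valid_rect => {}S {}r Hr Hcomp x Hx.
case: (eqVneq x r) => [->|Hxr]; first exact: ancestor_refl.
have Hx' : x \in S :\ r by rewrite !inE Hxr.
have [c [_ Hc _ IH]] := Hcomp x Hx'.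
exact: ancestor_trans (ancestor_parent Hc) (IH x (comp_self e Hx')).
Qed.

Lemma valid_parent_in S r :
  valid e par S r -> forall x, x \in S -> x != r -> exists2 p, p \in S & par x = Some p.
Proof.
elim/valid_rect => {}S {}r Hr Hcomp x Hx Hxr.
have Hx' : x \in S :\ r by rewrite !inE Hxr.
have [c [_ Hc _ IH]] := Hcomp x Hx'.
case: (eqVneq x c) => [->|Hxc]; first by exists r.
have [p Hp Hxp] := IH x (comp_self e Hx') Hxc.
by exists p => //; move/subsetP: (comp_sub e (S :\ r) x) => /(_ p Hp)/setD1P[].
Qed.

Definition closed_down (S : {set V}) : Prop :=
  forall w s, s \in S -> par w = Some s -> w \in S.

Lemma valid_subtree S r :
  valid e par S r -> closed_down S -> subtree par r = S.
Proof.
move=> HV Hclosed; apply/setP => x; rewrite inE; apply/idP/idP; last first.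
  by move=> Hx; apply/ancP; apply: valid_root_ancestor HV x Hx.
move/ancP => [n]; have Hr : r \in S by case: HV.
elim: n x => [|n IH] x; first by move=> [->].
rewrite iterSr /=; case Hp: (par x) => [p|]; last by rewrite iter_obind_None.
by move/IH => Hpin; apply: Hclosed Hpin Hp.
Qed.

(* Separation: if t is reachable from x inside G[A ∩ S], then some node of A
   is a common ancestor of x and t (the first node of A removed on the way
   down the search tree separates everything below it). *)
Lemma valid_separation S r :
  valid e par S r -> forall (A : {set V}) x t, x \in A -> x \in S ->
  connect (restr e (A :&: S)) x t ->
  exists w, [/\ w \in A, ancestor par w x & ancestor par w t].
Proof.
move=> HV; move: (HV); elim/valid_rect: S r / HV.
move=> S r Hr Hcomp HV A x t HxA HxS Hxt.
case HrA: (r \in A).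
  exists r; split => //; first exact: valid_root_ancestor HV x HxS.
  have /setIP [_ HtS] : t \in A :&: S by apply: connect_restr_in Hxt _; rewrite inE HxA.
  exact: valid_root_ancestor HV t HtS.
have Hx' : x \in S :\ r by rewrite !inE HxS andbT; apply: contraFneq HrA => <-.
have EAS : A :&: S = A :&: (S :\ r).
  by apply/setP => z; rewrite !inE; case: (eqVneq z r) => [->|]; rewrite ?HrA.
have [c [_ _ HVc IH]] := Hcomp x Hx'.
by apply: (IH HVc A x t HxA (comp_self e Hx')); apply: connect_restr_comp; rewrite -EAS.
Qed.

Hypothesis e_sym : symmetric e.

Lemma closed_down_comp S r y :
  valid e par S r -> closed_down S -> (forall p, par r = Some p -> p \notin S) ->
  closed_down (comp e (S :\ r) y).
Proof.
case=> {}S {}r _ Hcomp Hclosed Hroot w s Hs Hw.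
have /setD1P [Hsr HsS] := subsetP (comp_sub e (S :\ r) y) s Hs.
have Hwr : w != r by apply: contraTneq HsS => Ewr; apply: Hroot; rewrite -Ewr.
have Hw' : w \in S :\ r by rewrite !inE Hwr (Hclosed w s).
have [c [_ Hc HVc]] := Hcomp w Hw'.
have Hwc : w != c by apply: contra_neq Hsr => Ewc; move: Hw; rewrite Ewc Hc => -[].
have [p Hp] := valid_parent_in HVc (comp_self e Hw') Hwc.
by rewrite Hw => -[Eps]; rewrite Eps in Hs; exact: (comp_share e_sym Hp Hs).
Qed.

Lemma subtrees_connected S r :
  valid e par S r -> closed_down S -> (forall p, par r = Some p -> p \notin S) ->
  connected_set e S ->
  forall y, y \in S -> exists S',
    [/\ valid e par S' y, subtree par y = S' & connected_set e S'].
Proof.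
move=> HV; move: (HV); elim/valid_rect: S r / HV.
move=> S r Hr Hcomp HV Hclosed Hroot Hconn y Hy.
case: (eqVneq y r) => [->|Hyr]; first by exists S; split => //; apply: valid_subtree.
have Hy' : y \in S :\ r by rewrite !inE Hyr.
have [c [_ Hc HVc IH]] := Hcomp y Hy'.
apply: IH (HVc) (closed_down_comp HV Hclosed Hroot) _ _ _ (comp_self e Hy').
  by move=> p; rewrite Hc => -[<-]; rewrite !inE eqxx.
exact: comp_connected.
Qed.

End ValidSearchTrees.

Section SearchTrees.
Variables (V : finType) (e : rel V) (par : V -> option V) (r : V).
Hypothesis par_search : search_tree e par r.

(* Iterating the parent map never returns to the start: every orbit falls
   off the root. *)
Lemma search_tree_acyclic x n : iter n.+1 (obind par) (Some x) <> Some x.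
Proof.
case: par_search => HV Hr Hcycle.
have [k Hk] := valid_root_ancestor HV (in_setT x).
have Hperiodic j : iter (j * n.+1) (obind par) (Some x) = Some x.
  by elim: j => [|j IH] //; rewrite mulSn iterD IH Hcycle.
have := Hperiodic k.+1; rewrite mulnS addnC iterD iterS Hk /= Hr.
by rewrite iter_obind_None.
Qed.

Lemma ancestor_antisym a b : ancestor par a b -> ancestor par b a -> a = b.
Proof.
move=> [m Hm] [n Hn]; case: (eqVneq a b) => // Hab; exfalso.
case En: (n + m) => [|k].
  by move: En Hm => /eqP; rewrite addn_eq0 => /andP [_ /eqP ->] [Eba]; rewrite Eba eqxx in Hab.
by apply: (@search_tree_acyclic b k); rewrite -En iterD Hm Hn.
Qed.

Lemma child_not_ancestor c y : par c = Some y -> ~ ancestor par c y.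
Proof.
move=> Hc Hcy; have Ecy := ancestor_antisym Hcy (ancestor_parent Hc); subst y.
by apply: (@search_tree_acyclic c 0); rewrite /= Hc.
Qed.

Lemma depth_lt w u : ancestor par w u -> w != u -> depth par w < depth par u.
Proof.
move=> Hwu Hne; apply: proper_card; apply/properP; split.
  apply/subsetP => z; rewrite !inE => /andP [Hzw /ancP Hzw'].
  have Hzu := ancestor_trans Hzw' Hwu.
  have /ancP -> := Hzu; rewrite andbT.
  by apply: contra_neq Hne => Ezu; subst z; apply: ancestor_antisym.
by exists w; rewrite !inE ?eqxx //= Hne /=; apply/ancP.
Qed.

Lemma ancestor_depth_eq w u :
  ancestor par w u -> depth par u <= depth par w -> w = u.
Proof.
move=> Hwu Hd; case: (eqVneq w u) => // Hne.
by have := depth_lt Hwu Hne; rewrite ltnNge Hd.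
Qed.

(* In a search tree, a connected vertex set has a unique node of minimal
   depth: a common ancestor of two of its nodes lies inside it. *)
Lemma connected_top_unique (A : {set V}) u v :
  connected_set e A -> u \in A -> v \in A ->
  (forall w, w \in A -> depth par v <= depth par w) ->
  depth par u <= depth par v -> u = v.
Proof.
move=> Hconn HuA HvA Hvmin Hdu.
have Huv : connect (restr e (A :&: [set: V])) u v by rewrite setIT; apply: Hconn.
have [w [HwA Hwu Hwv]] := valid_separation par_search.1 HuA (in_setT u) Huv.
have Hdw := Hvmin w HwA.
by rewrite -(ancestor_depth_eq Hwv Hdw) (ancestor_depth_eq Hwu (leq_trans Hdu Hdw)).
Qed.

Lemma subtree_connected y : is_tree e -> connected_set e (subtree par y).
Proof.
case=> [[e_sym _] Hconn _]; case: par_search => HV Hr.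
have [|||S' [_ -> //]] := subtrees_connected e_sym HV _ _ _ (in_setT y).
- by move=> w s.
- by move=> p; rewrite Hr.
- move=> a b _ _; rewrite (@eq_connect _ _ e) ?Hconn // => x z.
  by rewrite /restr !inE !andbT.
Qed.

Variable fst : V -> V.

Lemma parts_disjoint y c c' x :
  par c = Some y -> par c' = Some y -> c != c' ->
  x \in part par fst y c -> x \in part par fst y c' -> False.
Proof.
have sibling_not_ancestor a b : par a = Some y -> par b = Some y -> a != b ->
    ~ ancestor par a b.
  move=> Ha Hb Hab Hanc; have [p [Hp Hap]] := ancestor_parent_proper Hanc Hab.
  by move: Hp; rewrite Hb => -[Ep]; subst p; apply: child_not_ancestor Ha Hap.
move=> Hc Hc' Hne /part_cases [[Ex Ec]|Hcx] /part_cases [[Ex' Ec']|Hc'x].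
- by move: Hne; rewrite Ec Ec' eqxx.
- by subst x; apply: child_not_ancestor Hc' Hc'x.
- by subst x; apply: child_not_ancestor Hc Hcx.
- case: (ancestor_total Hcx Hc'x); first exact: sibling_not_ancestor.
  by apply: sibling_not_ancestor; rewrite // eq_sym.
Qed.

End SearchTrees.

Section TransitionPoints.
Variables (V : finType) (e : rel V) (parP parT : V -> option V) (rP rT : V).
Variable fst : V -> V.
Hypotheses (e_tree : is_tree e) (P_search : search_tree e parP rP)
  (T_search : search_tree e parT rT).

Lemma transition_point_top v y : transition_point parP fst parT v y ->
  exists c, parP c = Some y /\ is_top parT (part parP fst y c) v.
Proof. by case=> c [/[!inE] /eqP Hc Htop _]; exists c. Qed.

Lemma transition_point_below v y :
  transition_point parP fst parT v y -> ancestor parP y v.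
Proof. by case/transition_point_top => c [Hc [Hv _]]; apply: part_ancestor Hc Hv. Qed.

(* The part of y1 containing y2 contains
   all of P(y2); so v is the top of the connected set P(y2), and the top u of
   the dominating part of y2 must coincide with v. *)
Lemma top_not_transition_below v y1 y2 c1 :
  parP c1 = Some y1 -> is_top parT (part parP fst y1 c1) v ->
  transition_point parP fst parT v y2 -> ancestor parP y1 y2 -> y1 != y2 -> False.
Proof.
move=> Hc1 [Hv1 Hmin1] [c2 [/[!inE] /eqP Hc2 Htop2 [c' [u [/[!inE] /eqP Hc' Hne Hu Hdom]]]]].
move=> Hy12 Hne12.
have [c [Hc Hcy2]] := ancestor_child Hy12 Hne12.
have below_c x : ancestor parP y2 x -> x \in part parP fst y1 c.
  by move=> Hx; apply: ancestor_part; apply: ancestor_trans Hcy2 Hx.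
have Hy2v := part_ancestor Hc2 Htop2.1.
have Ec : c = c1.
  case: (eqVneq c c1) => // Hcc1.
  by case: (parts_disjoint P_search Hc Hc1 Hcc1 (below_c v Hy2v) Hv1).
subst c1.
have Hdu : depth parT u <= depth parT v by apply: Hdom Htop2; rewrite inE Hc2.
have Hu_in : u \in subtree parP y2.
  by rewrite inE; apply/ancP; apply: part_ancestor Hc' Hu.1.
have Hv_in : v \in subtree parP y2 by rewrite inE; apply/ancP.
have Hv_top w : w \in subtree parP y2 -> depth parT v <= depth parT w.
  by move=> /[!inE] /ancP Hw; apply: Hmin1; apply: below_c.
have Hconn := subtree_connected P_search (y:=y2) e_tree.
have Euv := connected_top_unique T_search Hconn Hu_in Hv_in Hv_top Hdu.
subst u; exact: (parts_disjoint P_search Hc' Hc2 Hne Hu.1 Htop2.1).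
Qed.

End TransitionPoints.

Theorem mainTheorem2 (V : finType) (e : rel V) (parP parT : V -> option V)
    (rP rT : V) (fst : V -> V) :
  is_tree e ->
  search_tree e parP rP ->
  search_tree e parT rT ->
  (forall y, children parP y != set0 -> fst y \in children parP y) ->
  forall v y1 y2 : V,
    transition_point parP fst parT v y1 ->
    transition_point parP fst parT v y2 ->
    y1 = y2.
Proof.
move=> Htree HP HT _ v y1 y2 Hv1 Hv2.
case: (eqVneq y1 y2) => // Hne; exfalso.
(* y1 and y2 are both P-ancestors of v, hence comparable. *)
case: (ancestor_total (transition_point_below Hv1) (transition_point_below Hv2)).
  have [c [Hc Htop]] := transition_point_top Hv1.
  by move=> Hy12; apply: (top_not_transition_below Htree HP HT Hc Htop Hv2 Hy12 Hne).
have [c [Hc Htop]] := transition_point_top Hv2.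
by move=> Hy21; apply: (top_not_transition_below Htree HP HT Hc Htop Hv1 Hy21); rewrite eq_sym.
Qed.
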